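(* Let $q$ be a power of an odd prime $p$, $e\ge 2$, $r$ a positive integer, $a\in\mathbb{F}_{q^e}$ with $a\neq 0$, $f(x)=x^r(x^{q-1}+a)$, and $\ell=q^{e-1}+\cdots+q+1$. If $r\bmod\ell=hq+1$ for an integer $h$ with $p\nmid h$, then $f(x)$ does not permute $\mathbb{F}_{q^e}$.
   Context: $r\bmod\ell$ denotes the least nonnegative residue of $r$ modulo $\ell$. *)

From mathcomp Require Import all_boot all_algebra all_field.
Set Implicit Arguments. Unset Strict Implicit. Unset Printing Implicit Defensive.
Import GRing.Theory.
Local Open Scope ring_scope.

Definition fpoly_map (F : fieldType) (q r : nat) (a : F) (x : F) : F :=
  x ^+ r * (x ^+ q.-1 + a).

Definition ell (q e : nat) : nat := (\sum_(i < e) q ^ i)%N.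

From mathcomp Require Import all_boot all_algebra all_field.
From mathcomp Require Import fingroup cyclic zify ring.
Set Implicit Arguments. Unset Strict Implicit. Unset Printing Implicit Defensive.
Import GRing.Theory FinRing.Theory.

(* Hermite's criterion with the exponent t = 2N, N = q^(e-1) - 1: if f permuted
   F_(q^e), then sum_x f(x)^t = sum_y y^t = 0, since q^e - 1 does not divide t.
   In characteristic p, (X + a)^N = sum_(i <= N) a^(N-i) (-X)^i, so f(x)^t expands into
   monomials x^(rt + (q-1)(i+i')), and the only power sums that survive are those with
   i + i' = M := (q-2) l' + 2h + 1, where l' = q^(e-2) + ... + q + 1.  Hence
   sum_x f(x)^t = -(-1)^M a^(2N-M) #{(i, i') in [0, N]^2 | i + i' = M}, and this count is
   congruent to 2h or -2h modulo q.  As p does not divide 2h, the sum is nonzero. *)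

Lemma ell_succ q n : ell q n.+1 = (q * ell q n + 1)%N.
Proof.
rewrite /ell big_ord_recl expn0 big_distrr addnC; congr (_ + _)%N.
by apply: eq_bigr => i _; rewrite lift0 expnS.
Qed.

Definition npairs (n m : nat) : nat := \sum_(i < n) \sum_(j < n) (i + j == m : nat).

Lemma sum_ord_addn_eq n i m : \sum_(j < n) (i + j == m : nat) = (i <= m < i + n).
Proof. by elim: n => [|n IH]; rewrite ?big_ord0 ?big_ord_recr /= ?IH; lia. Qed.

Lemma npairsE n m : npairs n.+1 m = if m <= n then m.+1 else n.*2.+1 - m.
Proof.
have partial k : \sum_(i < k) (i <= m < i + n.+1) = minn k m.+1 - (m - n).
  by elim: k => [|k IH]; rewrite ?big_ord0 ?big_ord_recr /= ?IH; lia.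
rewrite /npairs; under eq_bigr do rewrite sum_ord_addn_eq.
by rewrite partial; case: ifP; lia.
Qed.

Lemma dvdn_lt_double l b : 0 < b < l.*2 -> (l %| b) = (b == l).
Proof.
move=> /andP[b_gt0 b_lt]; apply/idP/eqP => [/dvdnP[c b_eq] | ->]; last exact: dvdnn.
have : c * l < 2 * l by lia.
rewrite ltn_pmul2r; last by lia.
by move: b_gt0; rewrite b_eq; case: c {b_eq} => [|[|]] // _ _; rewrite mul1n.
Qed.

(* As r = hq + 1 and q l' = -1 modulo l = q l' + 1, we get 2 r l' + s = 2 l' + s - 2h
   modulo l, and the latter lies strictly between 0 and 2l. *)
Lemma dvdn_succ_mul_window q l' r h s :
  1 < q -> r %% (q * l' + 1) = h * q + 1 -> h < l' -> s <= 2 * ((q - 1) * l') ->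
  (q * l' + 1 %| 2 * r * l' + s) = (s == (q - 2) * l' + 2 * h + 1).
Proof.
move=> q_gt1 r_mod h_lt s_le; set l := q * l' + 1.
have ql'2 : q * l' = (q - 2) * l' + 2 * l' by rewrite -mulnDl subnK.
have ql'1 : q * l' = (q - 1) * l' + l' by rewrite -{3}[l']mul1n -mulnDl subnK // ltnW.
rewrite {1}(divn_eq r l) r_mod.
have -> : 2 * (r %/ l * l + (h * q + 1)) * l' + s =
          (2 * (r %/ l) * l' + 2 * h) * l + (2 * l' + s - 2 * h).
  by rewrite /l; nia.
rewrite dvdn_addr ?dvdn_mull // dvdn_lt_double; first by apply/eqP/eqP; rewrite /l; lia.
by rewrite /l; lia.
Qed.

Lemma dvdn_double_of_npairs d q l l' h :
  1 < q -> d %| q -> l' = q * l + 1 -> h < l' ->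
  d %| npairs ((q - 1) * l').+1 ((q - 2) * l' + 2 * h + 1) -> d %| 2 * h.
Proof.
move=> q_gt1 d_dvd_q l'_eq h_lt; rewrite npairsE.
have ql'2 : q * l' = (q - 2) * l' + 2 * l' by rewrite -mulnDl subnK.
have ql'1 : q * l' = (q - 1) * l' + l' by rewrite -{3}[l']mul1n -mulnDl subnK // ltnW.
case: leqP => [_ | M_gt d_dvd].
  rewrite (_ : _.+1 = q * ((q - 2) * l + 1) + 2 * h).
    by rewrite (dvdn_addr _ (dvdn_mulr _ d_dvd_q)).
  by rewrite l'_eq; nia.
have E : ((q - 1) * l').*2.+1 - ((q - 2) * l' + 2 * h + 1) + 2 * h = q * l'.
  move: M_gt ql'2 ql'1 h_lt.
  by move: ((q - 1) * l') ((q - 2) * l') (q * l') => A B C; lia.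
by rewrite -(dvdn_addr _ d_dvd) E dvdn_mulr.
Qed.

Local Open Scope ring_scope.

Lemma natr_card (R : finNzRingType) : #|R|%:R = 0 :> R.
Proof. by rewrite -zmodXgE -cardsT (expg_cardG (G := [set: R]%G)) ?inE. Qed.

Lemma card_pred_gt0 (R : finNzRingType) : (0 < #|R|.-1)%N.
Proof. by rewrite -ltnS prednK ?finNzRing_gt1 // ltnW ?finNzRing_gt1. Qed.

Section PowerSums.

Variable F : finFieldType.

Lemma expf_card_pred (x : F) : x != 0 -> x ^+ #|F|.-1 = 1.
Proof.
move=> x_neq0; apply: (mulfI x_neq0).
by rewrite mulr1 -exprS prednK ?expf_card // ltnW ?finNzRing_gt1.
Qed.

Lemma finField_sum_expr (m : nat) : (0 < m)%N ->
  \sum_(x : F) x ^+ m = if (#|F|.-1 %| m)%N then -1 else 0.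
Proof.
move=> m_gt0; case: ifP => [dvd_m | ndvd_m].
  rewrite (bigD1 0) //= expr0n gtn_eqF // add0r.
  rewrite (eq_bigr (fun _ => 1)) => [|x x_neq0]; last first.
    by case/dvdnP: dvd_m => c ->; rewrite mulnC exprM expf_card_pred ?expr1n.
  rewrite sumr_const cardC1; apply/eqP.
  by rewrite -addr_eq0 natr1 prednK ?natr_card // ltnW ?finNzRing_gt1.
have [w w_neq0 w_prim] : exists2 w : F, w != 0 & (#|F|.-1).-primitive_root w.
  have /hasP[w] : has (#|F|.-1).-primitive_root (enum [pred x : F | x != 0]).
    apply: has_prim_root; rewrite ?card_pred_gt0 ?enum_uniq //.
      by apply/allP => x; rewrite mem_enum inE unity_rootE => /expf_card_pred ->.
    by rewrite -cardE cardC1.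
  by rewrite mem_enum; exists w.
have : \sum_(x : F) x ^+ m = w ^+ m * \sum_(x : F) x ^+ m.
  rewrite [LHS](reindex_inj (mulfI w_neq0)) mulr_sumr.
  by apply: eq_bigr => x _; rewrite exprMn.
move/eqP; rewrite -subr_eq0 -{1}[\sum_x _]mul1r -mulrBl mulf_eq0 subr_eq0.
by rewrite eq_sym -(prim_order_dvd w_prim) ndvd_m => /eqP.
Qed.

End PowerSums.

Lemma exprD_predn_pchar (R : idomainType) (p j : nat) (x y : R) :
  p \in [pchar R] -> odd p -> (0 < j)%N ->
  (x + y) ^+ (p ^ j).-1 = \sum_(i < p ^ j) y ^+ ((p ^ j).-1 - i) * (- x) ^+ i.
Proof.
move=> pcharRp p_odd j_gt0; set n := (p ^ j)%N.
have n_gt1 : (1 < n)%N by rewrite -{1}(expn0 p) ltn_exp2l ?prime_gt1 ?(pcharf_prime pcharRp).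
have n_odd : odd n by rewrite oddX p_odd orbT.
have n0 : n%:R = 0 :> R by apply/eqP; rewrite -(dvdn_pcharf pcharRp) dvdn_exp.
have n1_gt0 : (0 < n.-1)%N by lia.
have [xy0 | xy_neq0] := eqVneq (x + y) 0.
  rewrite xy0 (_ : y = - x) ?expr0n; last by apply/eqP; rewrite -addr_eq0 addrC xy0.
  rewrite gtn_eqF // (eq_bigr (fun=> (- x) ^+ n.-1)).
    by rewrite sumr_const card_ord -[RHS]mulr_natl n0 /= !mul0r.
  by move=> i _; rewrite -exprD subnK //; have := ltn_ord i; lia.
apply: (mulfI xy_neq0); rewrite -exprS prednK; last by lia.
rewrite exprDn_pchar; last first.
  by rewrite (eq_pnat _ (pcharf_eq pcharRp)) pnatX pnat_id ?orbT ?(pcharf_prime pcharRp).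
have -> : x + y = y - - x by rewrite opprK addrC.
by rewrite -subrXX exprNn -signr_odd n_odd expr1 mulN1r opprK addrC.
Qed.

Lemma fpoly_map_expr_expand (R : fieldType) (p j q r : nat) (a x : R) :
  p \in [pchar R] -> odd p -> (0 < j)%N ->
  fpoly_map q r a x ^+ (p ^ j).-1.*2 =
  \sum_(i < p ^ j) \sum_(i' < p ^ j)
     (a ^+ ((p ^ j).-1 - i) * (-1) ^+ i) * (a ^+ ((p ^ j).-1 - i') * (-1) ^+ i') *
     x ^+ (r * (p ^ j).-1.*2 + q.-1 * (i + i'))%N.
Proof.
move=> pcharRp p_odd j_gt0.
rewrite /fpoly_map exprMn -[X in (_ + a) ^+ X]addnn exprD exprD_predn_pchar //.
rewrite mulr_suml mulr_sumr; apply: eq_bigr => i _.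
rewrite !mulr_sumr; apply: eq_bigr => i' _.
rewrite mulnDr !exprD !exprM !(exprNn (x ^+ q.-1)).
ring.
Qed.

Section NonPermutation.

Variables (F : finFieldType) (p k e r h : nat) (a : F).
Hypotheses (p_prime : prime p) (p_odd : odd p) (k_gt0 : (0 < k)%N)
  (e_gt1 : (1 < e)%N) (r_gt0 : (0 < r)%N) (cardF : #|F| = ((p ^ k) ^ e)%N)
  (a_neq0 : a != 0) (r_mod : (r %% ell (p ^ k) e = h * p ^ k + 1)%N).

Local Notation q := (p ^ k)%N.
Local Notation q' := (p ^ (k * e.-1))%N.
Local Notation N := q'.-1.
Local Notation l' := (ell q e.-1).
Local Notation M := ((q - 2) * l' + 2 * h + 1)%N.
Local Notation f := (fpoly_map q r a).

Let q_gt2 : (2 < q)%N.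
Proof.
have p_gt2 : (2 < p)%N.
  have : p != 2%N by apply: contraTneq p_odd => ->.
  by have := prime_gt1 p_prime; lia.
by apply: leq_trans p_gt2 _; rewrite -{1}(expn1 p) leq_exp2l ?prime_gt1.
Qed.

Let ell_e : ell q e = (q * l' + 1)%N.
Proof. by rewrite -ell_succ prednK // ltnW. Qed.

Let l'_eq : l' = (q * ell q e.-2 + 1)%N.
Proof. by rewrite -ell_succ; congr ell; lia. Qed.

Let N_eq : N = ((q - 1) * l')%N.
Proof. by rewrite expnM predn_exp subn1. Qed.

Let card_pred : #|F|.-1 = ((q - 1) * (q * l' + 1))%N.
Proof. by rewrite cardF predn_exp -ell_e subn1. Qed.

Let h_lt : (h < l')%N.
Proof.
have : (r %% ell q e < ell q e)%N by rewrite ltn_pmod // ell_e addn1.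
by rewrite r_mod ell_e ltn_add2r mulnC ltn_mul2l; lia.
Qed.

Let pcharFp : p \in [pchar F].
Proof. by apply: (card_finPcharP (n := (k * e)%N)); rewrite // cardF expnM. Qed.

Let N_gt0 : (0 < N)%N.
Proof. by rewrite N_eq l'_eq muln_gt0 addn1 andbT subn_gt0 ltnW. Qed.

Lemma dvd_card_pred_exponent (i j : nat) : (i <= N)%N -> (j <= N)%N ->
  (#|F|.-1 %| r * N.*2 + q.-1 * (i + j))%N = (i + j == M)%N.
Proof.
move=> i_le j_le; rewrite card_pred N_eq -[q.-1]subn1.
have -> : (r * ((q - 1) * l').*2 + (q - 1) * (i + j) = (q - 1) * (2 * r * l' + (i + j)))%N.
  by nia.
rewrite dvdn_pmul2l ?subn_gt0 1?ltnW //.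
by apply: dvdn_succ_mul_window; rewrite -?ell_e //; lia.
Qed.

Lemma sum_fpoly_expr :
  \sum_(x : F) f x ^+ N.*2 = - (a ^+ (N.*2 - M)%N * (-1) ^+ M) *+ npairs q' M.
Proof.
have j_gt0 : (0 < k * e.-1)%N by rewrite muln_gt0 k_gt0; lia.
under eq_bigr do rewrite (fpoly_map_expr_expand q r a _ pcharFp p_odd j_gt0).
rewrite exchange_big /npairs -sumrMnr; apply: eq_bigr => i _.
rewrite exchange_big -sumrMnr; apply: eq_bigr => j _.
have [i_le j_le] : (i <= N)%N /\ (j <= N)%N by have := ltn_ord i; have := ltn_ord j; lia.
rewrite -mulr_sumr finField_sum_expr; last by rewrite addn_gt0 muln_gt0 r_gt0 double_gt0 N_gt0.
rewrite dvd_card_pred_exponent //; case: eqP => [ij_M | _]; last by rewrite mulr0.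
rewrite mulrN1 mulrACA -!exprD ij_M.
by rewrite (_ : N - i + (N - j) = N.*2 - M)%N //; lia.
Qed.

Lemma sum_fpoly_expr_eq0 : injective f -> \sum_(x : F) f x ^+ N.*2 = 0.
Proof.
move=> f_inj.
have -> : \sum_(x : F) f x ^+ N.*2 = \sum_(x : F) x ^+ N.*2.
  by rewrite [RHS](reindex_inj f_inj).
rewrite finField_sum_expr ?double_gt0 // card_pred N_eq -muln2 -mulnA dvdn_pmul2l ?subn_gt0 1?ltnW //.
have l'_gt0 : (0 < l')%N by rewrite l'_eq addn1.
have : (3 * l' <= q * l')%N by rewrite leq_mul2r q_gt2 orbT.
by case: ifP => // /dvdn_leq; rewrite muln_gt0 l'_gt0 => /(_ isT); lia.
Qed.

Lemma p_dvd_npairs : injective f -> (p %| npairs q' M)%N.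
Proof.
move=> f_inj; have := sum_fpoly_expr_eq0 f_inj; rewrite sum_fpoly_expr.
have w_neq0 : a ^+ (N.*2 - M)%N * (-1) ^+ M != 0.
  by apply: mulf_neq0; [exact: expf_neq0 | rewrite signr_eq0].
by move/eqP; rewrite -mulr_natr mulf_eq0 oppr_eq0 (negbTE w_neq0) -(dvdn_pcharf pcharFp).
Qed.

Lemma p_dvd_h_of_npairs : (p %| npairs q' M)%N -> (p %| h)%N.
Proof.
have coprime_p2 : coprime p 2.
  by rewrite prime_coprime // dvdn_prime2 //; apply: contraTneq p_odd => ->.
rewrite -(@Gauss_dvdr p 2 h coprime_p2) -(prednK (_ : 0 < q')%N) ?expn_gt0 ?prime_gt0 //.
rewrite N_eq; exact: (dvdn_double_of_npairs (ltnW q_gt2) (dvdn_exp k_gt0 (dvdnn p)) l'_eq h_lt).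
Qed.

End NonPermutation.

Theorem proposition4p3 (F : finFieldType) (p k e r h : nat) (a : F) :
  prime p -> odd p -> (0 < k)%N -> (2 <= e)%N -> (0 < r)%N ->
  #|F| = ((p ^ k) ^ e)%N ->
  a != 0%R ->
  (r %% ell (p ^ k) e)%N = (h * p ^ k + 1)%N ->
  ~~ (p %| h)%N ->
  ~ injective (fpoly_map (p ^ k) r a).
Proof.
move=> p_prime p_odd k_gt0 e_gt1 r_gt0 cardF a_neq0 r_mod p_ndvd_h f_inj.
have := p_dvd_npairs p_prime p_odd k_gt0 e_gt1 r_gt0 cardF a_neq0 r_mod f_inj.
move/(p_dvd_h_of_npairs p_prime p_odd k_gt0 e_gt1 r_gt0 cardF a_neq0 r_mod).
exact/negP.
Qed.
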